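(* For all $v_1,v_2\in\mathcal S$, $\langle Yv_1,v_2\rangle=\langle v_1,Uv_2\rangle$ and $\langle Xv_1,v_2\rangle=\langle v_1,Xv_2\rangle$.
   Context: Chord diagrams and $w_{\mathfrak{sl}_2}(D)=\sum_\varphi x_{\varphi(p_1)}\cdots x_{\varphi(p_{2n})}\in\mathbb C[c]$ ($x_1,x_2,x_3$ the basis $\tfrac12\begin{pmatrix}0&1\\1&0\end{pmatrix},\tfrac12\begin{pmatrix}0&-i\\ i&0\end{pmatrix},\tfrac12\begin{pmatrix}1&0\\0&-1\end{pmatrix}$ of $\mathfrak{sl}_2$, $c=\sum x_i^2$, endpoints read in order from a cut point, $\varphi$ over maps chords$\to\{1,2,3\}$). A share: two oriented intervals (strand 1, strand 2) with finitely many chords, up to orientation-preserving diffeomorphisms of each strand. Join $(I,H)$: chord diagram whose circle reads strand 1 of $I$, strand 1 of $H$, strand 2 of $I$, strand 2 of $H$. $\mathcal S$: quotient of the $\mathbb C$-span of shares by $I\sim I'$ iff $w_{\mathfrak{sl}_2}((I,H))=w_{\mathfrak{sl}_2}((I',H))$ for all shares $H$; $\langle I,H\rangle=w_{\mathfrak{sl}_2}((I,H))$ is the induced bilinear form. Linear operators on $\mathcal S$ induced from shares: $U$ adds an arch on strand 1 whose endpoints precede and follow all other endpoints on strand 1; $X$ adds a bridge from a point after all endpoints on strand 1 to a point after all endpoints on strand 2; $Y$ adds a bridge from a point after all endpoints on strand 1 to a point before all endpoints on strand 2. *)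

From HB Require Import structures.
From mathcomp Require Import all_boot all_order all_algebra.
Set Implicit Arguments. Unset Strict Implicit. Unset Printing Implicit Defensive.
Import Order.TTheory GRing.Theory Num.Theory.
Local Open Scope ring_scope.

(* A chord diagram, read from a cut point, is a word of chord labels:
   each chord label occurs at exactly its two endpoints. *)
Definition word := seq nat.

(* A share: (strand 1, strand 2), each the sequence of chord labels of its
   endpoints in the order given by the orientation. *)
Definition share := (word * word)%type.

Definition valid_share (I : share) : bool :=
  all (fun x => count_mem x (I.1 ++ I.2) == 2%N) (I.1 ++ I.2).

(* join (I,H): strand 1 of I, strand 1 of H, strand 2 of I, strand 2 of H;
   chord labels of I and H are made disjoint (even / odd). *)
Definition tagI (s : word) : word := [seq k.*2 | k <- s].
Definition tagH (s : word) : word := [seq k.*2.+1 | k <- s].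
Definition join (I H : share) : word :=
  tagI I.1 ++ tagH H.1 ++ tagI I.2 ++ tagH H.2.

Definition fresh (I : share) : nat := (foldr maxn 0%N (I.1 ++ I.2)).+1.

(* U: arch on strand 1 enclosing all endpoints on strand 1 *)
Definition Ush (I : share) : share :=
  let f := fresh I in (f :: I.1 ++ [:: f], I.2).
(* X: bridge from end of strand 1 to end of strand 2 *)
Definition Xsh (I : share) : share :=
  let f := fresh I in (I.1 ++ [:: f], I.2 ++ [:: f]).
(* Y: bridge from end of strand 1 to beginning of strand 2 *)
Definition Ysh (I : share) : share :=
  let f := fresh I in (I.1 ++ [:: f], f :: I.2).

(* Letters 0,1,2 : 'I_3 stand for x_1, x_2, x_3. *)

Section Usl2.
Variable C : numClosedFieldType.

(* formal (finite) linear combinations of words in x_1,x_2,x_3 *)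
Definition fsum := seq (C * seq 'I_3).

Definition coef (f : fsum) (w : seq 'I_3) : C :=
  \sum_(p <- f | p.2 == w) p.1.

Definition fscale (a : C) (f : fsum) : fsum := [seq (a * p.1, p.2) | p <- f].

(* [x_i, x_j] for the basis x_1 = s1/2, x_2 = s2/2, x_3 = s3/2:
   [x_1,x_2] = i x_3, [x_2,x_3] = i x_1, [x_3,x_1] = i x_2. *)
Definition bracket (i j : 'I_3) : seq (C * 'I_3) :=
  match val i, val j with
  | 0, 1 => [:: ('i, inord 2)]
  | 1, 0 => [:: (- 'i, inord 2)]
  | 1, 2 => [:: ('i, inord 0)]
  | 2, 1 => [:: (- 'i, inord 0)]
  | 2, 0 => [:: ('i, inord 1)]
  | 0, 2 => [:: (- 'i, inord 1)]
  | _, _ => [::]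
  end%N.

Definition rel_elem (t : C * seq 'I_3 * 'I_3 * 'I_3 * seq 'I_3) : fsum :=
  let: (c, u, i, j, v) := t in
  (c, u ++ [:: i; j] ++ v) :: (- c, u ++ [:: j; i] ++ v)
  :: [seq (- c * q.1, u ++ [:: q.2] ++ v) | q <- bracket i j].

(* membership in the two-sided ideal generated by the defining relations *)
Definition inJ (f : fsum) : Prop :=
  exists l : seq (C * seq 'I_3 * 'I_3 * 'I_3 * seq 'I_3),
    forall w, coef f w = coef (flatten (map rel_elem l)) w.

Definition ueq (f g : fsum) : Prop := inJ (f ++ fscale (-1) g).

Fixpoint colourings (m : nat) : seq (seq 'I_3) :=
  if m is m'.+1 then [seq c :: t | c <- enum 'I_3, t <- colourings m']
  else [:: [::]].

Definition wsl2 (D : word) : fsum :=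
  let ids := undup D in
  [seq (1, [seq nth ord0 phi (index p ids) | p <- D])
  | phi <- colourings (size ids)].

Definition span_el := seq (C * share).

Definition pairing (v1 v2 : span_el) : fsum :=
  flatten [seq fscale (a.1 * b.1) (wsl2 (join a.2 b.2)) | a <- v1, b <- v2].

Definition opU (v : span_el) : span_el := [seq (a.1, Ush a.2) | a <- v].
Definition opX (v : span_el) : span_el := [seq (a.1, Xsh a.2) | a <- v].
Definition opY (v : span_el) : span_el := [seq (a.1, Ysh a.2) | a <- v].

Definition valid_span (v : span_el) : bool := all valid_share (map snd v).

End Usl2.

From HB Require Import structures.
From mathcomp Require Import all_boot all_order all_algebra.
From mathcomp Require Import ring.
From Stdlib Require Import FunctionalExtensionality.
Import Order.TTheory GRing.Theory Num.Theory.
Local Open Scope ring_scope.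

(* For Y both joins are the same chord diagram up to the
   name of the new chord.  For X the end of the new chord a has to be carried
   across the part h1 ... h2 of H, all of whose chords are internal to H.
   Carrying a letter y across such a chord word produces the terms [y, x_A] at
   both ends of every chord, and these cancel after summing over the colour A
   (ad-invariance of the Casimir tensor sum_A x_A (x) x_A).  Hence inserting y
   before h1 and before h2 equals inserting it after h1 and after h2, and the
   Casimir sum_A x_A x_A commutes with every letter.  Four instances of the
   first identity, with y the colour of a, add up to twice the identity for X
   once x_a x_a has been moved across h1 and across h2; divide by 2. *)

Lemma split_first (T : eqType) (x : T) (s : seq T) : x \in s ->
  exists s1 s2, s = s1 ++ x :: s2 /\ x \notin s1.
Proof.
elim: s => [|y s IH] //; rewrite inE; case: (eqVneq x y) => [<-|nxy] /= xs.
  by exists [::], s.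
have [s1 [s2 [-> xs1]]] := IH xs.
by exists (y :: s1), s2; rewrite inE negb_or nxy.
Qed.

Lemma split_count2 (T : eqType) (x : T) (s : seq T) : count_mem x s = 2 ->
  exists s1 s2 s3,
    [/\ s = s1 ++ x :: s2 ++ x :: s3, x \notin s1, x \notin s2 & x \notin s3].
Proof.
move=> s2x; have /split_first[s1 [t [Es xs1]]] : x \in s by rewrite -has_pred1 has_count s2x.
move: s2x; rewrite Es count_cat /= eqxx (count_memPn xs1) add0n add1n => -[t1x].
have /split_first[s2 [s3 [Et xs2]]] : x \in t by rewrite -has_pred1 has_count t1x.
move: t1x; rewrite Et count_cat /= eqxx (count_memPn xs2) add0n add1n => -[/count_memPn xs3].
by exists s1, s2, s3; rewrite -Et.
Qed.

Lemma sum_if_eq (R : nmodType) (T : eqType) (L : seq T) p (x : R) : uniq L ->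
  \sum_(l <- L) (if p == l then x else 0) = if p \in L then x else 0.
Proof.
move=> uL; case: ifPn => pL.
  by rewrite (bigD1_seq p) //= eqxx big1 ?addr0 // => l; rewrite eq_sym => /negbTE->.
by rewrite big1_seq // => l /andP[_ lL]; case: eqP => // epl; rewrite epl lL in pL.
Qed.

Lemma enum_I3 : enum 'I_3 = [:: inord 0; inord 1; inord 2].
Proof. by apply: (inj_map val_inj); rewrite val_enum_ord /= !inordK. Qed.

(** * Relabelling chords *)

Definition swap (a b x : nat) : nat := if x == a then b else if x == b then a else x.

Lemma swap_inj a b : injective (swap a b).
Proof.
apply: (can_inj (g := swap a b)) => x; rewrite /swap.
case: (eqVneq x a) => [->|xa]; first by rewrite eqxx; case: eqP.
case: (eqVneq x b) => [->|xb]; first by rewrite eqxx.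
by rewrite (negbTE xa) (negbTE xb).
Qed.

Lemma map_swap_chord a b (s1 s2 s3 : seq nat) :
  all (fun p => (p != a) && (p != b)) (s1 ++ s2 ++ s3) ->
  map (swap a b) (s1 ++ a :: s2 ++ a :: s3) = s1 ++ b :: s2 ++ b :: s3.
Proof.
have fix_s s : all (fun p => (p != a) && (p != b)) s -> map (swap a b) s = s.
  move/allP=> sab; rewrite -[RHS]map_id; apply/eq_in_map => x /sab /andP[xa xb].
  by rewrite /swap (negbTE xa) (negbTE xb).
rewrite !all_cat => /and3P[/fix_s s1E /fix_s s2E /fix_s s3E].
by rewrite map_cat /= map_cat /= /swap !eqxx s1E s2E s3E.
Qed.

Lemma fresh_notin (I : share) : fresh I \notin I.1 ++ I.2.
Proof.
suff max_ge k : k \in I.1 ++ I.2 -> (k <= foldr maxn 0 (I.1 ++ I.2))%N.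
  by apply/negP => /max_ge; rewrite ltnn.
elim: (I.1 ++ I.2) => [|x s IH] //=; rewrite inE => /predU1P[->|/IH ks].
  exact: leq_maxl.
by rewrite (leq_trans ks) // leq_maxr.
Qed.

Lemma tagI_cat (s t : word) : tagI (s ++ t) = tagI s ++ tagI t.
Proof. exact: map_cat. Qed.

Lemma tagH_cat (s t : word) : tagH (s ++ t) = tagH s ++ tagH t.
Proof. exact: map_cat. Qed.

Lemma count_tagH k (s : word) : count_mem k.*2.+1 (tagH s) = count_mem k s.
Proof. by rewrite count_map; apply: eq_count => x /=; rewrite eqSS (inj_eq double_inj). Qed.

Lemma odd_neq_double k k' : k.*2.+1 != k'.*2.
Proof. by apply/eqP => /(congr1 odd); rewrite /= !odd_double. Qed.

Lemma join_fresh I H :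
  all (fun p => (p != (fresh H).*2.+1) && (p != (fresh I).*2)) (join I H).
Proof.
have [fI fH] := (fresh_notin I, fresh_notin H).
have kI k : k \in I.1 ++ I.2 -> (k.*2 != (fresh H).*2.+1) && (k.*2 != (fresh I).*2).
  by move=> kin; rewrite eq_sym odd_neq_double (inj_eq double_inj); apply: contraNneq fI => <-.
have kH k : k \in H.1 ++ H.2 -> (k.*2.+1 != (fresh H).*2.+1) && (k.*2.+1 != (fresh I).*2).
  by move=> kin; rewrite odd_neq_double andbT eqSS (inj_eq double_inj); apply: contraNneq fH => <-.
apply/allP => p; rewrite /join !mem_cat => /or4P[] /mapP[k kin ->];
  [apply: kI | apply: kH | apply: kI | apply: kH]; by rewrite mem_cat kin ?orbT.
Qed.

Section Sl2Weight.
Variable C : numClosedFieldType.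
Implicit Types (f g h : fsum C) (w : seq 'I_3) (col c : nat -> 'I_3) (L : seq nat).

Definition ceq f g := forall w, coef f w = coef g w.

Lemma ceq_sym {f g} : ceq f g -> ceq g f.
Proof. by move=> E w; rewrite E. Qed.

Lemma coef_nil w : coef ([::] : fsum C) w = 0.
Proof. by rewrite /coef big_nil. Qed.

Lemma coef_cons p f w : coef (p :: f) w = (if p.2 == w then p.1 else 0) + coef f w.
Proof. by rewrite /coef big_mkcond big_cons -big_mkcond. Qed.

Lemma coef_cat f g w : coef (f ++ g) w = coef f w + coef g w.
Proof. by rewrite /coef big_cat. Qed.

Lemma coef_flatten (T : Type) (s : seq T) (F : T -> fsum C) w :
  coef (flatten (map F s)) w = \sum_(x <- s) coef (F x) w.
Proof.
elim: s => [|x s IH]; first by rewrite big_nil coef_nil.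
by rewrite /= coef_cat IH big_cons.
Qed.

Lemma coef_fscale a f w : coef (fscale a f) w = a * coef f w.
Proof. by rewrite /coef big_map big_distrr. Qed.

Lemma coef_sub f g w : coef (f ++ fscale (-1) g) w = coef f w - coef g w.
Proof. by rewrite coef_cat coef_fscale mulN1r. Qed.

Definition rel_data := (C * seq 'I_3 * 'I_3 * 'I_3 * seq 'I_3)%type.

Definition scale_rel (a : C) (t : rel_data) : rel_data :=
  let: (c, u, i, j, v) := t in (a * c, u, i, j, v).

Lemma rel_elem_scale a (t : rel_data) : rel_elem (scale_rel a t) = fscale a (rel_elem t).
Proof.
case: t => [[[[c u] i] j] v] /=; rewrite mulrN /fscale -map_comp.
by congr [:: _, _ & _]; apply: eq_map => q /=; rewrite !mulNr mulrN mulrA.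
Qed.

Lemma inJ_nil : inJ ([::] : fsum C).
Proof. by exists [::] => w; rewrite coef_nil. Qed.

Lemma inJ_rel (t : rel_data) : inJ (rel_elem t).
Proof. by exists [:: t] => w; rewrite /= cats0. Qed.

Lemma inJ_lin a b {f g h} : inJ f -> inJ g ->
  (forall w, coef h w = a * coef f w + b * coef g w) -> inJ h.
Proof.
move=> [l1 Hf] [l2 Hg] Eh; exists (map (scale_rel a) l1 ++ map (scale_rel b) l2) => w.
rewrite Eh Hf Hg map_cat flatten_cat coef_cat -!map_comp !coef_flatten !mulr_sumr.
by congr (_ + _); apply: eq_bigr => t _; rewrite /= rel_elem_scale coef_fscale.
Qed.

Lemma inJ_ceq {f g} : ceq f g -> inJ f -> inJ g.
Proof. by move=> Efg Jf; apply: (inJ_lin 1 0 Jf Jf) => w; rewrite -Efg mul1r mul0r addr0. Qed.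

Lemma inJ_cat {f g} : inJ f -> inJ g -> inJ (f ++ g).
Proof. by move=> Jf Jg; apply: (inJ_lin 1 1 Jf Jg) => w; rewrite coef_cat !mul1r. Qed.

Lemma inJ_scale a {f} : inJ f -> inJ (fscale a f).
Proof. by move=> Jf; apply: (inJ_lin a 0 Jf Jf) => w; rewrite coef_fscale mul0r addr0. Qed.

Lemma ueq_ceq {f g} : ceq f g -> ueq f g.
Proof. by move=> Efg; apply: inJ_ceq inJ_nil => w; rewrite coef_sub Efg subrr coef_nil. Qed.

Lemma ueq_refl f : ueq f f.
Proof. exact: ueq_ceq. Qed.

Lemma ueq_trans {f g h} : ueq f g -> ueq g h -> ueq f h.
Proof.
move=> Jfg Jgh; apply: (inJ_lin 1 1 Jfg Jgh) => w.
by rewrite !coef_sub !mul1r addrA subrK.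
Qed.

Lemma ueq_ceq_congr {f' g' f g} : ceq f' f -> ceq g' g -> ueq f' g' -> ueq f g.
Proof.
move=> Ef Eg J; apply: ueq_trans (ueq_ceq (ceq_sym Ef)) _.
exact: ueq_trans J (ueq_ceq Eg).
Qed.

Lemma ueq_cat {f1 g1 f2 g2} : ueq f1 g1 -> ueq f2 g2 -> ueq (f1 ++ f2) (g1 ++ g2).
Proof.
move=> J1 J2; apply: (inJ_lin 1 1 J1 J2) => w.
by rewrite !coef_sub !coef_cat; ring.
Qed.

Lemma ueq_catr {f g h} : ueq (f ++ h) (g ++ h) -> ueq f g.
Proof.
move=> J; apply: (inJ_lin 1 0 J J) => w.
by rewrite !coef_sub !coef_cat; ring.
Qed.

Lemma ueq_scale a {f g} : ueq f g -> ueq (fscale a f) (fscale a g).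
Proof.
move=> J; apply: (inJ_lin a 0 J J) => w.
by rewrite !coef_sub !coef_fscale; ring.
Qed.

Lemma ueq_flatten {T : eqType} {s : seq T} {F G : T -> fsum C} :
  {in s, forall x, ueq (F x) (G x)} -> ueq (flatten (map F s)) (flatten (map G s)).
Proof.
elim: s => [|x s IH] FG /=; first exact: ueq_refl.
apply: ueq_cat; first by apply: FG; rewrite inE eqxx.
by apply: IH => y ys; apply: FG; rewrite inE ys orbT.
Qed.

(* Adding the first four relations and using [K3 = K2], [K1 = K4] leaves
   [2 X = 2 Z]. *)
Lemma ueq_of_crossing_relations {X Z A B Cc D K1 K2 K3 K4 : fsum C} :
  ueq (A ++ B) (Z ++ K1) -> ueq (K2 ++ X) (D ++ A) ->
  ueq (D ++ Cc) (K3 ++ Z) -> ueq (X ++ K4) (Cc ++ B) ->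
  ueq K3 K2 -> ueq K1 K4 -> ueq X Z.
Proof.
move=> E1 E2 E3 E4 K32 K14.
move: (inJ_scale 2^-1 (inJ_cat E1 (inJ_cat E2 (inJ_cat E3 (inJ_cat E4 (inJ_cat K32 K14)))))).
apply: inJ_ceq => w; rewrite !(coef_cat, coef_fscale).
have two_neq0 : (2 : C) != 0 by rewrite pnatr_eq0.
by field.
Qed.

(** * Sums over colourings *)

Definition recolour c (l : nat) (A : 'I_3) : nat -> 'I_3 :=
  fun p => if p == l then A else c p.

Lemma recolourC c l l' A A' : l != l' ->
  recolour (recolour c l A) l' A' = recolour (recolour c l' A') l A.
Proof.
move=> nll'; apply: functional_extensionality => p; rewrite /recolour.
by case: (eqVneq p l) => [->|//]; rewrite (negbTE nll').
Qed.

Lemma recolour_same c l A A' : recolour (recolour c l A) l A' = recolour c l A'.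
Proof. by apply: functional_extensionality => p; rewrite /recolour; case: (p == l). Qed.

(* A colouring is a total map from chord labels to colours: [sumcol col L F]
   sums [F] over the 3 ^ size L colourings that agree with [col] outside [L]. *)
Fixpoint sumcol col L (F : (nat -> 'I_3) -> fsum C) : fsum C :=
  if L is l :: L' then flatten [seq sumcol (recolour col l A) L' F | A <- enum 'I_3]
  else F col.

Fixpoint sumcolC col L (phi : (nat -> 'I_3) -> C) : C :=
  if L is l :: L' then \sum_(A <- enum 'I_3) sumcolC (recolour col l A) L' phi
  else phi col.

Lemma coef_sumcol col L F w :
  coef (sumcol col L F) w = sumcolC col L (fun c => coef (F c) w).
Proof.
elim: L col => [|l L IH] col //=.
by rewrite coef_flatten; apply: eq_bigr => A _; rewrite IH.
Qed.

Lemma eq_sumcolC col L phi psi :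
  (forall c, phi c = psi c) -> sumcolC col L phi = sumcolC col L psi.
Proof.
move=> E; elim: L col => [|l L IH] col /=; first exact: E.
by apply: eq_bigr => A _; apply: IH.
Qed.

Lemma sumcolC0 col L : sumcolC col L (fun _ => 0) = 0.
Proof. by elim: L col => [|l L IH] col //=; rewrite big1 // => A _; rewrite IH. Qed.

Lemma sumcolC_add col L phi psi :
  sumcolC col L (fun c => phi c + psi c) = sumcolC col L phi + sumcolC col L psi.
Proof. by elim: L col => [|l L IH] col //=; rewrite -big_split; apply: eq_bigr. Qed.

Lemma sumcolC_sum (T : Type) (s : seq T) col L (phi : T -> (nat -> 'I_3) -> C) :
  sumcolC col L (fun c => \sum_(x <- s) phi x c) = \sum_(x <- s) sumcolC col L (phi x).
Proof.
elim: L col => [|l L IH] col //=.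
by rewrite exchange_big /=; apply: eq_bigr => A _; exact: IH.
Qed.

Lemma sumcolC_cat col L1 L2 phi :
  sumcolC col (L1 ++ L2) phi = sumcolC col L1 (fun c => sumcolC c L2 phi).
Proof. by elim: L1 col => [|l L1 IH] col //=; apply: eq_bigr => A _; apply: IH. Qed.

Lemma sumcolC_move_front col L1 l L2 phi :
  sumcolC col (L1 ++ l :: L2) phi = sumcolC col (l :: L1 ++ L2) phi.
Proof.
elim: L1 col => [|l' L1 IH] col //=; under eq_bigr => A' _ do rewrite IH /=.
case: (eqVneq l l') => [<-|nll'].
  by apply: eq_bigr => A _; apply: eq_bigr => A' _; rewrite !recolour_same.
rewrite exchange_big /=; apply: eq_bigr => A _; apply: eq_bigr => A' _.
by rewrite recolourC // eq_sym.
Qed.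

Lemma sumcolC_perm col {L L'} phi :
  perm_eq L L' -> sumcolC col L phi = sumcolC col L' phi.
Proof.
elim: L L' col => [|l L IH] L' col; first by move/perm_size/esym/size0nil->.
move=> pL; have lL' : l \in L' by rewrite -(perm_mem pL) mem_head.
case/splitPr: lL' pL => L1 L2 pL.
have {}pL : perm_eq L (L1 ++ L2).
  by rewrite -(perm_cons l) (perm_trans pL) // -cat1s perm_catCA.
by rewrite sumcolC_move_front /=; apply: eq_bigr => A _; apply: IH.
Qed.

Lemma sumcol_perm col {L L'} F : perm_eq L L' -> ceq (sumcol col L F) (sumcol col L' F).
Proof. by move=> pL w; rewrite !coef_sumcol; apply: sumcolC_perm. Qed.

Lemma sumcol_cat col L F G :
  ceq (sumcol col L (fun c => F c ++ G c)) (sumcol col L F ++ sumcol col L G).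
Proof.
move=> w; rewrite coef_cat !coef_sumcol -sumcolC_add.
by apply: eq_sumcolC => c; rewrite coef_cat.
Qed.

Lemma sumcol_catL col L1 L2 F :
  sumcol col (L1 ++ L2) F = sumcol col L1 (fun c => sumcol c L2 F).
Proof. by elim: L1 col => [|l L1 IH] col //=; congr flatten; apply: eq_map => A. Qed.

Lemma ueq_sumcol col L {F G} :
  (forall c, ueq (F c) (G c)) -> ueq (sumcol col L F) (sumcol col L G).
Proof.
move=> FG; elim: L col => [|l L IH] col /=; first exact: FG.
by apply: ueq_flatten => A _; apply: IH.
Qed.

Lemma ueq_sumcol_cat col L {F1 F2 G1 G2} :
  (forall c, ueq (F1 c ++ F2 c) (G1 c ++ G2 c)) ->
  ueq (sumcol col L F1 ++ sumcol col L F2) (sumcol col L G1 ++ sumcol col L G2).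
Proof.
move=> FG; apply: (ueq_ceq_congr (sumcol_cat _ _ _ _) (sumcol_cat _ _ _ _)).
exact: ueq_sumcol.
Qed.

Definition extend col L (phi : seq 'I_3) : nat -> 'I_3 :=
  fun p => if p \in L then nth ord0 phi (index p L) else col p.

Lemma sumcol_colourings col L F : uniq L ->
  sumcol col L F = flatten [seq F (extend col L phi) | phi <- colourings (size L)].
Proof.
elim: L col => [|l L IH] col /=.
  by move=> _; rewrite cats0; congr F; apply: functional_extensionality.
case/andP=> lL uL.
have extend_cons A t : extend col (l :: L) (A :: t) = extend (recolour col l A) L t.
  apply: functional_extensionality => p; rewrite /extend /recolour inE /= eq_sym.
  by case: (eqVneq p l) => [->|_] //=; rewrite (negbTE lL).
elim: (enum 'I_3) => [|A s IHs] //=.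
rewrite map_cat flatten_cat IHs IH // -map_comp.
by congr (flatten _ ++ _); apply: eq_map => t /=; rewrite extend_cons.
Qed.

Definition wsum col L (m : word) : fsum C := sumcol col L (fun c => [:: (1, map c m)]).

Lemma wsl2_wsum col D : wsl2 C D = wsum col (undup D) D.
Proof.
rewrite /wsum sumcol_colourings ?undup_uniq // flatten_map1 /wsl2.
apply: eq_map => phi; congr (_, _); apply/eq_in_map => p pD.
by rewrite /extend mem_undup pD.
Qed.

Lemma wsl2_relabel (s : nat -> nat) D : injective s -> wsl2 C (map s D) = wsl2 C D.
Proof.
move=> s_inj; rewrite /wsl2 undup_map_inj // size_map; apply: eq_map => phi.
by congr (_, _); rewrite -map_comp; apply: eq_map => p /=; rewrite index_map.
Qed.

Lemma wsum_cons_inner col l L m :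
  ceq (wsum col (l :: L) m) (sumcol col L (fun c => wsum c [:: l] m)).
Proof.
have lL : perm_eq (l :: L) (L ++ [:: l]) by rewrite -cat1s perm_catC.
by move=> w; rewrite /wsum (sumcol_perm _ _ lL) sumcol_catL.
Qed.

(** * Commuting a letter through a word *)

(* [adj y c P u m v] is the image of [u ++ map c m ++ v] under the derivation
   [ad y] acting only on the letters of [map c m] whose label satisfies [P]. *)
Fixpoint adj (y : 'I_3) c (P : pred nat) (u : seq 'I_3) (m : word) (v : seq 'I_3) : fsum C :=
  if m is p :: m' then
    (if P p then [seq (q.1, u ++ q.2 :: map c m' ++ v) | q <- bracket C y (c p)] else [::])
    ++ adj y c P (rcons u (c p)) m' v
  else [::].

Lemma adj_cat y c P u m1 m2 v :
  adj y c P u (m1 ++ m2) v = adj y c P u m1 (map c m2 ++ v) ++ adj y c P (u ++ map c m1) m2 v.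
Proof.
elim: m1 u => [|p m1 IH] u /=; first by rewrite cats0.
by rewrite IH -catA map_cat -catA cat_rcons.
Qed.

Lemma adj_out y c P u m v : ~~ has P m -> adj y c P u m v = [::].
Proof. by elim: m u => [|p m IH] u //=; rewrite negb_or => /andP[/negbTE-> /IH->]. Qed.

Lemma coef_adj_mem y c L u m v w : uniq L ->
  coef (adj y c (mem L) u m v) w = \sum_(l <- L) coef (adj y c (pred1 l) u m v) w.
Proof.
move=> uL; elim: m u => [|p m IH] u /=.
  by rewrite coef_nil big1 // => l _; rewrite coef_nil.
under [RHS]eq_bigr => l _ do rewrite coef_cat (fun_if (fun f : fsum C => coef f w)) coef_nil.
by rewrite big_split /= coef_cat IH sum_if_eq // (fun_if (fun f : fsum C => coef f w)) coef_nil.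
Qed.

Lemma ueq_swap_letters u y a v :
  ueq [:: (1, u ++ y :: a :: v)]
      ((1, u ++ a :: y :: v) :: [seq (q.1, u ++ q.2 :: v) | q <- bracket C y a]).
Proof.
apply: inJ_ceq (inJ_rel (1, u, y, a, v)) => w.
rewrite /= !coef_cons /= mulr1 /fscale -map_comp.
by congr (_ + (_ + coef _ _)); apply: eq_map => q.
Qed.

Lemma ueq_move_label c P y d1 m d2 : all P m ->
  ueq [:: (1, map c (d1 ++ y :: m ++ d2))]
      ((1, map c (d1 ++ m ++ y :: d2)) :: adj (c y) c P (map c d1) m (map c d2)).
Proof.
elim: m d1 => [|p m IH] d1 /=; first by move=> _; exact: ueq_refl.
case/andP=> -> /IH IHm; rewrite !map_cat /=.
apply: (ueq_trans (ueq_swap_letters _ _ _ _)).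
move: (IHm (rcons d1 p)); rewrite -cats1 -!catA !map_cat /= !map_cat => {}IHm.
apply: (ueq_trans (ueq_cat IHm (ueq_refl _))); apply: ueq_ceq => w.
by rewrite /= !coef_cons !coef_cat -cats1 /=; ring.
Qed.

(** * Invariance of chord words *)

(* The structure constants [bracket y A = sum_B f(y,A,B) x_B] are antisymmetric
   in [A] and [B] (ad-invariance of the Casimir tensor [sum_A x_A (x) x_A]). *)
Lemma bracket_pair_cancel (y : 'I_3) (g : 'I_3 -> 'I_3 -> seq 'I_3) w :
  \sum_(A <- enum 'I_3) (coef [seq (q.1, g q.2 A) | q <- bracket C y A] w
                        + coef [seq (q.1, g A q.2) | q <- bracket C y A] w) = 0.
Proof.
rewrite enum_I3 !big_cons big_nil.
case: y => [[|[|[|y]]] Hy] //; rewrite /bracket /= ?inordK //= !coef_cons !coef_nil /=;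
  set b1 := (_ == w); set b2 := (_ == w); case: b1; case: b2; ring.
Qed.

Lemma adj_pair_cancel y c l m w : count_mem l m = 2 ->
  \sum_(A <- enum 'I_3) coef (adj y (recolour c l A) (pred1 l) [::] m [::]) w = 0.
Proof.
case/split_count2=> [m1 [m2 [m3 [-> l1 l2 l3]]]].
rewrite -[RHS](bracket_pair_cancel y (fun a b => map c m1 ++ a :: map c m2 ++ b :: map c m3) w).
apply: eq_bigr => A _.
have recolour_out m' : l \notin m' -> map (recolour c l A) m' = map c m'.
  move=> lm'; apply/eq_in_map => p pm'; rewrite /recolour.
  by case: eqP => // epl; rewrite -epl pm' in lm'.
have adj_nol m' u v : l \notin m' -> adj y (recolour c l A) (pred1 l) u m' v = [::].
  by move=> lm'; apply: adj_out; rewrite has_pred1.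
have recolour_l : recolour c l A l = A by rewrite /recolour eqxx.
rewrite adj_cat adj_nol //= adj_cat (adj_nol m2) //= adj_nol //= eqxx.
rewrite map_cat /= recolour_l !recolour_out // !cats0 coef_cat.
by congr (coef _ _ + coef _ _); apply: eq_map => q; rewrite -cats1 -!catA.
Qed.

Lemma sumcolC_adj_chords col L y m w : uniq L -> y \notin L ->
  {in L, forall l, count_mem l m = 2} ->
  sumcolC col L (fun c => coef (adj (c y) c (mem L) [::] m [::]) w) = 0.
Proof.
move=> uL yL m2.
under eq_sumcolC => c do rewrite coef_adj_mem //.
rewrite sumcolC_sum big1_seq // => l /andP[_ lL].
have L_rot : perm_eq L (rem l L ++ [:: l]) by rewrite perm_sym perm_catC perm_sym perm_to_rem.
rewrite (sumcolC_perm _ _ L_rot) sumcolC_cat -[RHS](sumcolC0 col (rem l L)).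
apply: eq_sumcolC => c /=; rewrite -[RHS](adj_pair_cancel (c y) c l m w (m2 l lL)).
have yl : y != l by apply: contraNneq yL => ->.
by apply: eq_bigr => A _; rewrite {1}/recolour (negbTE yl).
Qed.

Lemma adj_two_blocks y c L (d1 h1 d2 h2 d3 : word) :
  all (predC (mem L)) (d1 ++ d2 ++ d3) ->
  adj y c (mem L) (map c d1) h1 (map c (d2 ++ h2 ++ d3))
    ++ adj y c (mem L) (map c (d1 ++ h1 ++ d2)) h2 (map c d3)
  = adj y c (mem L) [::] (d1 ++ h1 ++ d2 ++ h2 ++ d3) [::].
Proof.
have out d u v : all (predC (mem L)) d -> adj y c (mem L) u d v = [::].
  by move=> dL; apply: adj_out; rewrite -all_predC.
rewrite !all_cat => /and3P[d1L d2L d3L].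
by rewrite !adj_cat (out d1) // (out d2) // (out d3) // /= !cats0 !map_cat -!catA.
Qed.

Definition chords_on L (h : word) : Prop :=
  {subset h <= L} /\ {in L, forall l, count_mem l h = 2}.

Lemma wsum_ad_invariant col L y (d1 h1 d2 h2 d3 : word) :
  uniq L -> y \notin L -> chords_on L (h1 ++ h2) -> all (predC (mem L)) (d1 ++ d2 ++ d3) ->
  ueq (wsum col L (d1 ++ y :: h1 ++ d2 ++ h2 ++ d3)
       ++ wsum col L (d1 ++ h1 ++ d2 ++ y :: h2 ++ d3))
      (wsum col L (d1 ++ h1 ++ y :: d2 ++ h2 ++ d3)
       ++ wsum col L (d1 ++ h1 ++ d2 ++ h2 ++ y :: d3)).
Proof.
move=> uL yL [hL h2L] dL; set m := d1 ++ h1 ++ d2 ++ h2 ++ d3.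
have h1L : all (mem L) h1 by apply/allP => p ph; apply: hL; rewrite mem_cat ph.
have h2L' : all (mem L) h2 by apply/allP => p ph; apply: hL; rewrite mem_cat ph orbT.
have move2 c : ueq [:: (1, map c (d1 ++ h1 ++ d2 ++ y :: h2 ++ d3))]
   ((1, map c (d1 ++ h1 ++ d2 ++ h2 ++ y :: d3))
      :: adj (c y) c (mem L) (map c (d1 ++ h1 ++ d2)) h2 (map c d3)).
  by have := ueq_move_label c (mem L) y (d1 ++ h1 ++ d2) h2 d3 h2L'; rewrite -!catA.
rewrite /wsum; apply: (ueq_trans (ueq_sumcol_cat col L
  (fun c => ueq_cat (ueq_move_label c (mem L) y d1 h1 (d2 ++ h2 ++ d3) h1L) (move2 c)))).
have count_m : {in L, forall l, count_mem l m = 2}.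
  move=> l lL; rewrite -(h2L l lL) /m !count_cat; move: dL; rewrite !all_cat.
  have notd d : all (predC (mem L)) d -> count_mem l d = 0%N.
    by move=> /allP dL; apply/count_memPn/negP => /dL /=; rewrite lL.
  by case/and3P=> /notd-> /notd-> /notd->; rewrite !add0n addn0.
apply: ueq_ceq => w; rewrite !coef_cat !coef_sumcol -!sumcolC_add.
rewrite -[RHS]addr0 -(sumcolC_adj_chords col L y m w uL yL count_m) -sumcolC_add.
apply: eq_sumcolC => c; rewrite -(adj_two_blocks (c y) c L d1 h1 d2 h2 d3 dL).
by rewrite !coef_cons !coef_cat coef_nil !addr0 addrACA.
Qed.

Lemma wsum_chords_central col L y (d1 h d2 : word) :
  uniq L -> y \notin L -> chords_on L h -> all (predC (mem L)) (d1 ++ d2) ->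
  ueq (wsum col L (d1 ++ y :: h ++ d2)) (wsum col L (d1 ++ h ++ y :: d2)).
Proof.
move=> uL yL hL dL.
have := wsum_ad_invariant col L y d1 h [::] [::] d2 uL yL.
by rewrite cats0 /= => /(_ hL dL); exact: ueq_catr.
Qed.

Lemma wsum_chords_commute col L (d1 s h d2 : word) :
  uniq L -> chords_on L h -> all (predC (mem L)) (d1 ++ s ++ d2) ->
  ueq (wsum col L (d1 ++ s ++ h ++ d2)) (wsum col L (d1 ++ h ++ s ++ d2)).
Proof.
move=> uL hL; elim: s d1 => [|y s IH] d1 /=; first by move=> _; exact: ueq_refl.
rewrite all_cat /= => /and3P[d1L yL sd2L].
apply: (ueq_trans (_ : ueq _ (wsum col L (d1 ++ y :: h ++ s ++ d2)))).
  have := IH (rcons d1 y); rewrite -cats1 -!catA /=; apply.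
  by rewrite all_cat d1L /= yL.
by apply: wsum_chords_central; rewrite // all_cat d1L.
Qed.

(** * Moving a chord end across a share *)

Lemma wsum_chord_cross col a L (i1 h1 i2 h2 : word) :
  uniq L -> a \notin L -> chords_on L (h1 ++ h2) -> all (predC (mem L)) (i1 ++ i2) ->
  a \notin i1 ++ h1 ++ i2 ++ h2 ->
  ueq (wsum col (a :: L) (i1 ++ a :: h1 ++ i2 ++ a :: h2))
      (wsum col (a :: L) (i1 ++ h1 ++ a :: i2 ++ h2 ++ [:: a])).
Proof.
move=> uL aL hL; rewrite all_cat => /andP[i1L i2L] ai.
have wsum_a m : wsum col (a :: L) m = sumcol col [:: a] (fun c => wsum c L m) by [].
have move_a d1 d2 d3 : all (predC (mem L)) (d1 ++ d2 ++ d3) ->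
  ueq (wsum col (a :: L) (d1 ++ a :: h1 ++ d2 ++ h2 ++ d3)
       ++ wsum col (a :: L) (d1 ++ h1 ++ d2 ++ a :: h2 ++ d3))
      (wsum col (a :: L) (d1 ++ h1 ++ a :: d2 ++ h2 ++ d3)
       ++ wsum col (a :: L) (d1 ++ h1 ++ d2 ++ h2 ++ a :: d3)).
  by move=> dL; rewrite !wsum_a; apply: ueq_sumcol_cat => c; apply: wsum_ad_invariant.
have move_aa d1 s d2 : a \notin d1 ++ s ++ d2 ->
  ueq (wsum col (a :: L) (d1 ++ s ++ [:: a; a] ++ d2))
      (wsum col (a :: L) (d1 ++ [:: a; a] ++ s ++ d2)).
  move=> ad; apply: (ueq_ceq_congr (ceq_sym (wsum_cons_inner _ _ _ _))
                                   (ceq_sym (wsum_cons_inner _ _ _ _))).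
  apply: ueq_sumcol => c; apply: wsum_chords_commute => //.
    by split=> [p|l]; rewrite !inE ?orbb // => /eqP->; rewrite /= eqxx.
  by apply/allP => p pd /=; rewrite inE; apply: contraNneq ad => <-.
apply: (ueq_of_crossing_relations
  (A := wsum col (a :: L) (i1 ++ a :: h1 ++ i2 ++ h2 ++ [:: a]))
  (B := wsum col (a :: L) (i1 ++ h1 ++ i2 ++ a :: h2 ++ [:: a]))
  (Cc := wsum col (a :: L) (i1 ++ h1 ++ a :: i2 ++ a :: h2))
  (D := wsum col (a :: L) (i1 ++ a :: h1 ++ a :: i2 ++ h2))
  (K1 := wsum col (a :: L) (i1 ++ h1 ++ i2 ++ h2 ++ [:: a; a]))
  (K2 := wsum col (a :: L) (i1 ++ a :: a :: h1 ++ i2 ++ h2))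
  (K3 := wsum col (a :: L) (i1 ++ h1 ++ a :: a :: i2 ++ h2))
  (K4 := wsum col (a :: L) (i1 ++ h1 ++ i2 ++ a :: a :: h2))).
- by apply: move_a; rewrite !all_cat /= i1L i2L aL.
- have := move_a (i1 ++ [:: a]) i2 [::]; rewrite -!catA !cats0; apply.
  by rewrite !all_cat /= i1L i2L aL.
- have := move_a i1 (a :: i2) [::]; rewrite !cats0; apply.
  by rewrite !all_cat /= i1L i2L aL.
- have := move_a i1 (i2 ++ [:: a]) [::]; rewrite -!catA !cats0; apply.
  by rewrite !all_cat /= i1L i2L aL.
- exact: move_aa.
- by have := move_aa (i1 ++ h1 ++ i2) h2 [::]; rewrite -!catA !cats0; apply.
Qed.

Lemma wsl2_chord_cross (i1 h1 i2 h2 : word) a :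
  a \notin i1 ++ h1 ++ i2 ++ h2 -> all (predC (mem (h1 ++ h2))) (i1 ++ i2) ->
  {in h1 ++ h2, forall l, count_mem l (h1 ++ h2) = 2} ->
  ueq (wsl2 C (i1 ++ a :: h1 ++ i2 ++ a :: h2)) (wsl2 C (i1 ++ h1 ++ a :: i2 ++ h2 ++ [:: a])).
Proof.
move=> ai ih h2c; set LO := undup (i1 ++ i2); set LH := undup (h1 ++ h2).
have iLH : all (predC (mem LH)) (i1 ++ i2).
  by apply: sub_all ih => p /=; rewrite /LH mem_undup.
have aLH : a \notin LH.
  by rewrite /LH mem_undup; apply: contra ai; rewrite !mem_cat => /orP[]->; rewrite ?orbT.
have uL : uniq (LO ++ a :: LH).
  rewrite cat_uniq /= !undup_uniq aLH /= andbT negb_or; apply/andP; split.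
    by rewrite /LO mem_undup; apply: contra ai; rewrite !mem_cat => /orP[]->; rewrite ?orbT.
  apply/hasPn => p; rewrite /LO /LH !mem_undup => ph.
  by apply: contraL ph => /(allP ih).
have labels1 : perm_eq (LO ++ a :: LH) (undup (i1 ++ a :: h1 ++ i2 ++ a :: h2)).
  apply: uniq_perm; rewrite ?undup_uniq // => p.
  rewrite mem_undup !(mem_cat, inE) /LO /LH !mem_undup !mem_cat.
  by case: (p \in i1); case: (p \in i2); case: (p == a); case: (p \in h1); case: (p \in h2).
have labels2 : perm_eq (LO ++ a :: LH) (undup (i1 ++ h1 ++ a :: i2 ++ h2 ++ [:: a])).
  apply: (perm_trans labels1); apply/perm_undup/perm_mem/permP => P.
  by rewrite !count_cat /= !count_cat /= addn0; ring.
rewrite !(wsl2_wsum (fun=> ord0)).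
apply: (ueq_ceq_congr (sumcol_perm _ _ labels1) (sumcol_perm _ _ labels2)).
rewrite /wsum !sumcol_catL; apply: ueq_sumcol => c; apply: wsum_chord_cross => //.
- exact: undup_uniq.
- by split=> [p|l]; rewrite mem_undup // => /h2c.
Qed.

Lemma wsl2_join_Ysh I H : wsl2 C (join (Ysh I) H) = wsl2 C (join I (Ush H)).
Proof.
rewrite -[RHS](wsl2_relabel _ _ (swap_inj (fresh H).*2.+1 (fresh I).*2)); congr wsl2.
rewrite /join /Ysh /Ush /= tagI_cat tagH_cat -!catA /= map_swap_chord //.
exact: join_fresh.
Qed.

Lemma wsl2_join_Xsh I H : valid_share H ->
  ueq (wsl2 C (join (Xsh I) H)) (wsl2 C (join I (Xsh H))).
Proof.
move=> vH; have fresh_join := join_fresh I H.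
rewrite -[wsl2 C (join I (Xsh H))](wsl2_relabel _ _ (swap_inj (fresh H).*2.+1 (fresh I).*2)).
have -> : join I (Xsh H) = (tagI I.1 ++ tagH H.1) ++ (fresh H).*2.+1
                           :: (tagI I.2 ++ tagH H.2) ++ [:: (fresh H).*2.+1].
  by rewrite /join /Xsh /= !tagH_cat -!catA.
rewrite map_swap_chord ?cats0 -?catA //.
have -> : join (Xsh I) H = tagI I.1 ++ (fresh I).*2 :: tagH H.1 ++ tagI I.2
                           ++ (fresh I).*2 :: tagH H.2.
  by rewrite /join /Xsh /= !tagI_cat -!catA.
apply: wsl2_chord_cross.
- by apply/negP => /(allP fresh_join); rewrite eqxx andbF.
- rewrite -tagI_cat -tagH_cat; apply/allP => _ /mapP[k _ ->] /=.
  by apply/mapP => -[k' _ /eqP]; rewrite eq_sym (negbTE (odd_neq_double _ _)).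
- rewrite -tagH_cat => _ /mapP[k kH ->]; rewrite count_tagH.
  exact/eqP/(allP vH).
Qed.

Lemma ueq_pairing_op (F G : share -> share) (v1 v2 : span_el C) :
  (forall I, {in map snd v2, forall H, ueq (wsl2 C (join (F I) H)) (wsl2 C (join I (G H)))}) ->
  ueq (pairing [seq (a.1, F a.2) | a <- v1] v2) (pairing v1 [seq (b.1, G b.2) | b <- v2]).
Proof.
move=> FG; rewrite /pairing; elim: v1 => [|a v1 IH] /=; first exact: ueq_refl.
rewrite !flatten_cat; apply: ueq_cat => //; rewrite -!map_comp.
by apply: ueq_flatten => b bv2 /=; apply/ueq_scale/FG/map_f.
Qed.

End Sl2Weight.

Theorem lemma9 (C : numClosedFieldType) (v1 v2 : span_el C) :
  valid_span v1 -> valid_span v2 ->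
  ueq (pairing (opY v1) v2) (pairing v1 (opU v2)) /\
  ueq (pairing (opX v1) v2) (pairing v1 (opX v2)).
Proof.
move=> _ v2_valid; split; apply: ueq_pairing_op => I H Hv2.
  by rewrite wsl2_join_Ysh; exact: ueq_refl.
by apply: wsl2_join_Xsh; exact: (allP v2_valid).
Qed.
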